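(* Let $y=\gamma+i\tau$ with $\tau\in\mathbb{R}$ and $\gamma>-1/2$. For every compact set $K\subset\mathbb{C}$ there is a constant $C_K>0$ such that for all $a\in K$, $n\in\mathbb{N}$ and $m\in\{0,1,\dots,n\}$, \[ \bigl|{}_2F_1(-m,1+y;2\gamma+1;1-e^{ia/n})\bigr|\le {}_2F_1(-n,1+|y|;2\gamma+1;-C_K/n). \]
   Context: ${}_2F_1(\alpha,\beta;c;z)=\sum_{k\ge0}\frac{(\alpha)_k(\beta)_k}{(c)_k}\frac{z^k}{k!}$ is the Gauss hypergeometric function, where $(v)_0=1$, $(v)_k=v(v+1)\cdots(v+k-1)$; when $\alpha=-m$ is a nonpositive integer it is the polynomial $\sum_{k=0}^m\binom{m}{k}\frac{(\beta)_k}{(c)_k}(-z)^k$. *)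

From HB Require Import structures.
From mathcomp Require Import all_boot all_order all_algebra.
From mathcomp Require Import all_classical all_reals all_analysis.
From mathcomp Require Import complex.
Set Implicit Arguments. Unset Strict Implicit. Unset Printing Implicit Defensive.
Import Order.TTheory GRing.Theory Num.Theory.
Import numFieldNormedType.Exports.
Local Open Scope ring_scope.

Definition pochhammer {F : pzRingType} (v : F) (k : nat) : F :=
  \prod_(i < k) (v + i%:R).

(* Terminating Gauss hypergeometric function 2F1(-m, b; c; z)
   = sum_{k=0}^m binom(m,k) (b)_k/(c)_k (-z)^k. *)
Definition hyp2F1_neg {F : fieldType} (m : nat) (b c z : F) : F :=
  \sum_(k < m.+1) ('C(m, k))%:R * (pochhammer b k / pochhammer c k) * (- z) ^+ k.

Definition cexp {R : realType} (z : R[i]) : R[i] :=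
  let: Complex x t := z in
  ((expR x * cos t) +i* (expR x * sin t))%C.

(* Standard topology on C = R[i]: the one induced by the complex modulus
   (mathcomp-analysis gives every numFieldType this normed-module structure;
   we make it canonical on the concrete type R[i]). *)
HB.instance Definition _ (R : rcfType) :=
  NormedModule.copy R[i] (R[i] : numFieldType)^o.

(* The series is majorized termwise: for k <= m <= n we have 'C(m, k) <= 'C(n, k)
   and |(1 + y)_k| <= (1 + |y|)_k, while (2 gamma + 1)_k > 0 since gamma > -1/2.
   So it suffices that |1 - e^{ia/n}| <= C_K / n.  If |a| <= B on K, this follows
   from |1 - e^w| <= 2 e^B |w| for |w| <= B, obtained by writing
   |1 - e^{x+it}|^2 = (e^x - 1)^2 + 2 e^x (1 - cos t) and using the mean value
   bounds |e^x - 1| <= e^|x| |x| and 1 - cos t <= t^2. *)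

From HB Require Import structures.
From mathcomp Require Import all_boot all_order all_algebra.
From mathcomp Require Import all_classical all_reals all_analysis.
From mathcomp Require Import complex ring lra.
Import Order.TTheory GRing.Theory Num.Theory.
Import numFieldNormedType.Exports.
Local Open Scope ring_scope.

Section Pochhammer.
Variable F : numDomainType.
Implicit Types (b c : F) (k : nat).

Lemma pochhammer_gt0 c k : 0 < c -> 0 < pochhammer c k.
Proof. by move=> c_gt0; apply: prodr_gt0 => i _; apply: ltr_wpDr. Qed.

Lemma norm_pochhammer_le b c k : `|b| <= c -> `|pochhammer b k| <= pochhammer c k.
Proof.
move=> le_bc; rewrite normr_prod; apply: ler_prod => i _.
by rewrite normr_ge0 (le_trans (ler_normD _ _)) // normr_nat lerD2r.
Qed.

End Pochhammer.

Lemma hyp2F1_neg_widen {F : fieldType} {m n : nat} (b c z : F) : (m <= n)%N ->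
  hyp2F1_neg m b c z =
  \sum_(k < n.+1) 'C(m, k)%:R * (pochhammer b k / pochhammer c k) * (- z) ^+ k.
Proof.
move=> le_mn; rewrite /hyp2F1_neg (big_ord_widen n.+1 (fun k =>
  'C(m, k)%:R * (pochhammer b k / pochhammer c k) * (- z) ^+ k)) // big_mkcond.
by apply: eq_bigr => k _; case: ifPn; rewrite // -leqNgt => /bin_small ->; rewrite !mul0r.
Qed.

Lemma norm_hyp2F1_neg_le (F : numFieldType) (m n : nat) (b b' c z t : F) :
  (m <= n)%N -> 0 < c -> `|b| <= b' -> `|z| <= t ->
  `|hyp2F1_neg m b c z| <= hyp2F1_neg n b' c (- t).
Proof.
move=> le_mn c_gt0 le_bb' le_zt.
have t_ge0 : 0 <= t := le_trans (normr_ge0 z) le_zt.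
rewrite (hyp2F1_neg_widen b c z le_mn) /hyp2F1_neg opprK.
apply: le_trans (ler_norm_sum _ _ _) _; apply: ler_sum => k _.
have pc_gt0 : 0 < pochhammer c k by exact: pochhammer_gt0.
rewrite normrM normrX normrN normrM normr_nat normf_div (gtr0_norm pc_gt0).
have le_coef : 'C(m, k)%:R * (`|pochhammer b k| / pochhammer c k)
               <= 'C(n, k)%:R * (pochhammer b' k / pochhammer c k).
  apply: ler_pM; rewrite ?ler0n ?divr_ge0 ?(ltW pc_gt0) ?ler_nat ?leq_bin2l //.
  by rewrite ler_pM2r ?invr_gt0 // norm_pochhammer_le.
apply: ler_pM le_coef _; rewrite ?mulr_ge0 ?divr_ge0 ?invr_ge0 ?(ltW pc_gt0) ?exprn_ge0 //.
by rewrite lerXn2r ?nnegrE.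
Qed.

Section RealBounds.
Variable R : realType.
Implicit Types (f df : R -> R) (M t x : R).

Lemma norm_sub_le_deriv f df M x :
  (forall c : R, is_derive c 1 f (df c)) ->
  (forall c, `|c| <= `|x| -> `|df c| <= M) ->
  `|f x - f 0| <= M * `|x|.
Proof.
move=> f_df df_le.
have mvt a b : a <= b -> exists2 c, c \in `[a, b] & f b - f a = df c * (b - a).
  move=> le_ab; apply: MVT_segment le_ab _ _.
  by apply: derivable_within_continuous => c _; exact: ex_derive.
have [x_ge0 | x_lt0] := leP 0 x.
  have [c /itvP c_in ->] := mvt _ _ x_ge0.
  rewrite subr0 normrM ler_wpM2r // df_le // !ger0_norm ?c_in //.
have [c /itvP c_in] := mvt _ _ (ltW x_lt0).
rewrite distrC => ->; rewrite normrM sub0r normrN ler_wpM2r // df_le //.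
by rewrite !ler0_norm ?c_in ?(ltW x_lt0) // lerN2 c_in.
Qed.

Lemma norm_sin_le t : `|sin t| <= `|t|.
Proof.
have := @norm_sub_le_deriv sin cos 1 t (@is_derive_sin R) (fun c _ => cos_max c).
by rewrite sin0 subr0 mul1r.
Qed.

Lemma one_sub_cos_le t : 1 - cos t <= t ^+ 2.
Proof.
have sin_le c : `|c| <= `|t| -> `|- sin c| <= `|t|.
  by rewrite normrN => /(le_trans (norm_sin_le c)).
have := @norm_sub_le_deriv cos (fun c => - sin c) `|t| t (@is_derive_cos R) sin_le.
rewrite cos0 -normrM -expr2 normrX real_normK ?num_real // distrC.
exact: le_trans (ler_norm _).
Qed.

Lemma norm_expR_sub1_le x : `|expR x - 1| <= expR `|x| * `|x|.
Proof.
have exp_le c : `|c| <= `|x| -> `|expR c| <= expR `|x|.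
  move=> le_cx; rewrite gtr0_norm ?expR_gt0 // ler_expR.
  exact: le_trans (ler_norm c) le_cx.
have := @norm_sub_le_deriv expR expR _ x (@is_derive_expR R) exp_le.
by rewrite expR0.
Qed.

End RealBounds.

Local Open Scope complex_scope.

Lemma norm_one_sub_cexp_le {R : realType} {B : R} {w : R[i]} :
  `|w| <= B%:C -> `|1 - cexp w| <= (2 * expR B)%:C * `|w|.
Proof.
move=> le_wB.
have le_xB : `|complex.Re w| <= B by rewrite -lecR (le_trans (normc_ge_Re w)).
case: w le_xB {le_wB} => x t /= le_xB.
have eB_ge1 : 1 <= expR B by rewrite -expR0 ler_expR (le_trans (normr_ge0 x)).
have le_ex : expR x <= expR B by rewrite ler_expR (le_trans (ler_norm x)).
have le_exp1 : (expR x - 1) ^+ 2 <= expR B ^+ 2 * x ^+ 2.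
  rewrite -real_normK ?num_real // -(real_normK (num_real x)) -exprMn.
  rewrite lerXn2r ?nnegrE ?mulr_ge0 ?expR_ge0 //.
  by rewrite (le_trans (norm_expR_sub1_le _ x)) // ler_wpM2r // ler_expR.
have le_cos := one_sub_cos_le _ t.
rewrite -(@ler_pXn2r _ 2) ?nnegrE ?mulr_ge0 ?normr_ge0 ?ler0c ?expR_ge0 //.
rewrite exprMn -!add_Re2_Im2 -rmorphXn -rmorphM lecR /=.
have -> : (1 - expR x * cos t) ^+ 2 + (0 - expR x * sin t) ^+ 2 =
          (expR x - 1) ^+ 2 + 2 * expR x * (1 - cos t)
          + expR x ^+ 2 * (cos t ^+ 2 + sin t ^+ 2 - 1) by ring.
rewrite cos2Dsin2 subrr mulr0 addr0.
have le_cos_term : expR x * (1 - cos t) <= expR B ^+ 2 * t ^+ 2.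
  apply: ler_pM; rewrite ?expR_ge0 ?subr_ge0 ?cos_le1 //.
  by rewrite (le_trans le_ex) // expr2 ler_peMl ?expR_ge0.
have := mulr_ge0 (exprn_ge0 2 (expR_ge0 B)) (sqr_ge0 x).
have := mulr_ge0 (exprn_ge0 2 (expR_ge0 B)) (sqr_ge0 t).
lra.
Qed.

Lemma compact_complex_bounded {R : realType} {K : set R[i]} : compact K ->
  exists2 B : R, 0 < B & forall a, K a -> `|a| <= B%:C.
Proof.
rewrite compact_cover => K_cover.
have K_sub : (K `<=` \bigcup_(n : nat) ball (0 : R[i]) n%:R)%classic.
  move=> p _; exists (Num.truncn (complex.Re `|p|)).+1 => //=.
  rewrite -ball_normE /= sub0r normrN.
  have -> : `|p| = (Normc.normc p)%:C by [].
  by rewrite -(rmorph_nat (real_complex R)) ltcR truncnS_gt.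
have /K_cover[|D _ D_cover] := K_sub; first by move=> n _; exact: ball_open.
exists (\max_(i <- finmap.enum_fset D) i).+1%:R => // a /D_cover [n Dn].
rewrite -ball_normE /= sub0r normrN => /lt_le_trans lt_an; apply/ltW/lt_an.
rewrite -(rmorph_nat (real_complex R)) lecR ler_nat ltnW // ltnS.
exact: (@leq_bigmax_seq _ _ xpredT id).
Qed.

Lemma norm_one_sub_cexp_iMdivn_le (R : realType) (B : R) (a : R[i]) (n : nat) :
  `|a| <= B%:C -> `|1 - cexp ('i * a / n%:R)| <= (2 * expR B * B)%:C / n%:R.
Proof.
move=> le_aB.
have norm_w : `|'i * a / n%:R| = `|a| / n%:R.
  by rewrite normf_div normrM normCi mul1r normr_nat.
have le_wB : `|'i * a / n%:R| <= B%:C.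
  rewrite norm_w (le_trans _ le_aB) //; case: n {norm_w} => [|n].
    by rewrite invr0 mulr0.
  by rewrite ler_piMr // invf_le1 ?ler1n ?ltr0n.
apply: le_trans (norm_one_sub_cexp_le le_wB) _.
rewrite norm_w mulrA ler_wpM2r ?invr_ge0 // [(_ * B)%:C]rmorphM ler_wpM2l //.
by rewrite ler0c mulr_ge0 ?expR_ge0.
Qed.

Theorem lemma2p2 (R : realType) (gamma tau : R) (hgamma : - (1 / 2) < gamma)
  (K : set R[i]) (hK : compact K) :
  let y : R[i] := gamma +i* tau in
  exists CK : R, 0 < CK /\
    forall a : R[i], K a -> forall n m : nat, (m <= n)%N ->
      `| hyp2F1_neg m (1 + y) (2 * gamma + 1)%:C
           (1 - cexp ('i%C * a / n%:R)) |
      <= hyp2F1_neg n (1 + `|y|) (2 * gamma + 1)%:C (- (CK%:C / n%:R)).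
Proof.
move=> y; have [B B_gt0 le_KB] := compact_complex_bounded hK.
exists (2 * expR B * B); split; first by rewrite !mulr_gt0 ?expR_gt0.
move=> a Ka n m le_mn; apply: norm_hyp2F1_neg_le => //.
- by rewrite ltcR; lra.
- by rewrite (le_trans (ler_normD _ _)) ?normr1.
- exact: norm_one_sub_cexp_iMdivn_le (le_KB a Ka).
Qed.
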